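(* Let $n\ge 3$ and let $\mathcal{A}$ be an arrangement of $(n-2)$-planes in $\mathbb{P}^n$ whose incidence graph $\Gamma(\mathcal{A})$ is isomorphic to the complete bipartite graph $K_{a,b}$ with $2 \le a \le b$. Then $\bigcap_{X\in\mathcal{A}} X$ is an $(n-4)$-dimensional linear subspace of $\mathbb{P}^n$.
   Context: A subspace arrangement is a finite collection of linear subspaces of $\mathbb{P}^n$ with no inclusions among distinct members. The incidence graph $\Gamma(\mathcal{A})$ has vertex set $\mathcal{A}$ and an edge between $X\ne Y$ iff $\dim(X\cap Y)$ exceeds the expected dimension, which for two $(n-2)$-planes in $\mathbb{P}^n$ is $n-4$ (the empty set has dimension $-1$; for $n=3$ an $(n-4)$-plane means the empty set). $K_{a,b}$ is the complete bipartite graph with parts of sizes $a$ and $b$. *)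

(* Projective space P^n over a field F is modelled by the
   vector space F^(n+1) = 'rV[F]_(n.+1); a projective linear subspace is a
   vector subspace U, of projective dimension \dim U - 1 (the zero subspace,
   i.e. the empty set, has projective dimension -1). *)
From HB Require Import structures.
From mathcomp Require Import all_boot all_order all_algebra.
Set Implicit Arguments. Unset Strict Implicit. Unset Printing Implicit Defensive.
Import GRing.Theory Num.Theory.
Local Open Scope ring_scope.

Definition pdim (F : fieldType) (n : nat) (U : {vspace 'rV[F]_(n.+1)}) : int :=
  (\dim U)%:Z - 1.

Definition is_kplane (F : fieldType) (n : nat) (k : int)
  (U : {vspace 'rV[F]_(n.+1)}) : bool := pdim U == k.

Definition expected_dim (F : fieldType) (n : nat)
  (X Y : {vspace 'rV[F]_(n.+1)}) : int := pdim X + pdim Y - n%:Z.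

Definition incident (F : fieldType) (n : nat)
  (X Y : {vspace 'rV[F]_(n.+1)}) : bool :=
  (X != Y) && (expected_dim X Y < pdim (X :&: Y)%VS).

Definition is_arrangement (F : fieldType) (n : nat) (I : finType)
  (A : I -> {vspace 'rV[F]_(n.+1)}) : Prop :=
  forall i j : I, i != j -> ~~ (A i <= A j)%VS.

Definition Kab_adj (a b : nat) (u v : 'I_a + 'I_b) : bool :=
  match u, v with
  | inl _, inr _ | inr _, inl _ => true
  | _, _ => false
  end.

Definition incidence_graph_iso_Kab (F : fieldType) (n : nat) (I : finType)
  (A : I -> {vspace 'rV[F]_(n.+1)}) (a b : nat) : Prop :=
  exists phi : I -> 'I_a + 'I_b, bijective phi /\
    forall i j : I, incident (A i) (A j) = Kab_adj (phi i) (phi j).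

(** Two (n-2)-planes of P^n meet in dimension at least n-4, with equality exactly
    when they are not incident.  If X1, X2 are non-incident and Y is incident to
    both, then X1 ∩ Y and X2 ∩ Y are hyperplanes of Y, so their intersection has
    dimension at least n-4 and must be the whole of X1 ∩ X2; hence X1 ∩ X2 ⊆ Y.
    In K_{a,b} with a, b >= 2 this puts the intersection L of two planes of one
    side inside every plane of the other side, and symmetrically for the
    intersection L' of two planes of the other side.  Then L' ⊆ L, both have
    dimension n-4, so L = L' lies in every plane and is the total intersection. *)
From HB Require Import structures.
From mathcomp Require Import all_boot all_order all_algebra.
From mathcomp Require Import zify.
Set Implicit Arguments. Unset Strict Implicit. Unset Printing Implicit Defensive.
Import GRing.Theory Num.Theory.
Local Open Scope ring_scope.

Lemma dimv_cap_ge (F : fieldType) (vT : vectType F) (X Y : {vspace vT}) :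
  (\dim X + \dim Y <= \dim (X :&: Y) + \dim {:vT})%N.
Proof.
have := dimvS (subvf (X + Y)); have := dimv_sum_cap X Y; lia.
Qed.

Lemma capv_subv_by_dim (F : fieldType) (vT : vectType F) (X1 X2 Y : {vspace vT}) :
  (\dim Y + \dim (X1 :&: X2) <= \dim (X1 :&: Y) + \dim (X2 :&: Y))%N ->
  (X1 :&: X2 <= Y)%VS.
Proof.
move=> hdim; set M := ((X1 :&: Y) :&: (X2 :&: Y))%VS.
have M_sub : (M <= X1 :&: X2)%VS by apply: capvS; apply: capvSl.
have dimM : (\dim (X1 :&: X2) <= \dim M)%N.
  have := dimv_sum_cap (X1 :&: Y) (X2 :&: Y).
  have sum_sub : (X1 :&: Y + X2 :&: Y <= Y)%VS by rewrite subv_add !capvSr.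
  have := dimvS sum_sub; rewrite -/M; lia.
have <- : M = (X1 :&: X2)%VS by apply/eqP; rewrite eqEdim M_sub.
exact: subv_trans (capvSr _ _) (capvSr _ _).
Qed.

Section Planes.
Variables (F : fieldType) (n : nat).
Hypothesis n_ge3 : (3 <= n)%N.
Implicit Types X Y : {vspace 'rV[F]_(n.+1)}.

Lemma dimv_cap_planes X Y :
  \dim X = n.-1 -> \dim Y = n.-1 -> (n - 3 <= \dim (X :&: Y))%N.
Proof.
move=> dimX dimY; have := dimv_cap_ge X Y.
rewrite dimvf /dim /= mul1n dimX dimY; lia.
Qed.

Lemma incident_planesE X Y : \dim X = n.-1 -> \dim Y = n.-1 ->
  incident X Y = (X != Y) && (n.-2 <= \dim (X :&: Y))%N.
Proof.
move=> dimX dimY; rewrite /incident /expected_dim /pdim dimX dimY.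
by congr andb; apply/idP/idP; lia.
Qed.

Lemma dimv_cap_nonincident X Y : \dim X = n.-1 -> \dim Y = n.-1 ->
  X != Y -> ~~ incident X Y -> \dim (X :&: Y) = (n - 3)%N.
Proof.
move=> dimX dimY neqXY; rewrite incident_planesE // neqXY /= -ltnNge.
by have := dimv_cap_planes dimX dimY; lia.
Qed.

Lemma capv_nonincident_sub X1 X2 Y :
  \dim X1 = n.-1 -> \dim X2 = n.-1 -> \dim Y = n.-1 ->
  X1 != X2 -> ~~ incident X1 X2 -> incident X1 Y -> incident X2 Y ->
  (X1 :&: X2 <= Y)%VS.
Proof.
move=> dimX1 dimX2 dimY neqX nincX.
rewrite !incident_planesE // => /andP[_ incX1Y] /andP[_ incX2Y].
apply: capv_subv_by_dim.
by rewrite dimY dimv_cap_nonincident //; lia.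
Qed.

Variables (I : finType) (A : I -> {vspace 'rV[F]_(n.+1)}) (side : I -> bool).
Hypothesis dimA : forall i, \dim (A i) = n.-1.
Hypothesis A_inj : injective A.
Hypothesis incidentA : forall i j, incident (A i) (A j) = (side i != side j).

Lemma capv_same_side_sub i j k :
  i != j -> side i = side j -> side k != side i -> (A i :&: A j <= A k)%VS.
Proof.
move=> neqij sideij sidek.
apply: capv_nonincident_sub => //.
- by rewrite (inj_eq A_inj).
- by rewrite incidentA sideij eqxx.
- by rewrite incidentA eq_sym.
- by rewrite incidentA -sideij eq_sym.
Qed.

Lemma bigcapv_complete_bipartite x1 x2 y1 y2 :
  x1 != x2 -> y1 != y2 -> side x1 = side x2 -> side y1 = side y2 ->
  side y1 != side x1 -> (\bigcap_i A i)%VS = (A x1 :&: A x2)%VS.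
Proof.
move=> neqx neqy sidex sidey sidexy.
have dim_cap i j : i != j -> side i = side j -> \dim (A i :&: A j) = (n - 3)%N.
  by move=> neqij sideij; rewrite dimv_cap_nonincident ?incidentA ?sideij ?eqxx
    ?(inj_eq A_inj).
have capy_eq : (A y1 :&: A y2)%VS = (A x1 :&: A x2)%VS.
  apply/eqP; rewrite eqEdim subv_cap !dim_cap // leqnn andbT.
  by apply/andP; split; apply: capv_same_side_sub; rewrite // -?sidex eq_sym.
have cap_sub i : (A x1 :&: A x2 <= A i)%VS.
  have [sidei | sidei] := eqVneq (side i) (side x1).
    by rewrite -capy_eq capv_same_side_sub // sidei eq_sym.
  exact: capv_same_side_sub.
apply: subv_anti; apply/andP; split; last exact/subv_bigcapP.
by rewrite subv_cap (bigcapv_inf x1) ?(bigcapv_inf x2).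
Qed.

End Planes.

Theorem lemma2p1 (F : fieldType) (n : nat) (I : finType)
  (A : I -> {vspace 'rV[F]_(n.+1)}) (a b : nat) :
  (3 <= n)%N ->
  is_arrangement A ->
  (forall i : I, is_kplane (n%:Z - 2) (A i)) ->
  (2 <= a)%N -> (a <= b)%N ->
  incidence_graph_iso_Kab A a b ->
  pdim (\bigcap_(i : I) A i)%VS = n%:Z - 4.
Proof.
move=> n_ge3 arrA planeA a_ge2 le_ab [phi [[g _ phiK] incA]].
have dimA i : \dim (A i) = n.-1 by move: (planeA i) => /eqP; rewrite /pdim; lia.
have A_inj : injective A.
  move=> i j eqA; apply/eqP; apply: contraT => /arrA.
  by rewrite eqA subvv.
pose side i := if phi i is inl _ then true else false.
have incidentA i j : incident (A i) (A j) = (side i != side j).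
  by rewrite incA /side; case: (phi i); case: (phi j).
have b_ge2 : (1 < b)%N by lia.
have g_inj := can_inj phiK.
pose x1 := g (inl (Ordinal (ltnW a_ge2))); pose x2 := g (inl (Ordinal a_ge2)).
pose y1 := g (inr (Ordinal (ltnW b_ge2))); pose y2 := g (inr (Ordinal b_ge2)).
rewrite (@bigcapv_complete_bipartite _ _ n_ge3 _ _ side dimA A_inj incidentA
  x1 x2 y1 y2) ?(inj_eq g_inj) /side ?phiK //.
rewrite /pdim dimv_cap_nonincident ?incidentA /side ?phiK ?(inj_eq A_inj)
  ?(inj_eq g_inj) //; lia.
Qed.
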